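(* Let $\varepsilon>0$ and $n\in\mathbb{N}$. Then $$\mu_n\left(\left\{r\in Q_n:\sum_{k=0}^{n-1}p(r)_k\ge n\left(\tfrac12+\varepsilon\right)\right\}\right)\le e^{-2\varepsilon^2n}$$ and $$\mu_n\left(\left\{r\in Q_n:\sum_{k=0}^{n-1}p(r)_k\le n\left(\tfrac12-\varepsilon\right)\right\}\right)\le e^{-2\varepsilon^2n},$$ where the $p(r)_k\in\mathbb{F}_2$ are summed as integers $0$ or $1$.
   Context: $\mathbb{F}_2((x^{-1}))$ is the field of formal series $r=\sum_{z\in\mathbb{Z}}a_zx^z$, $a_z\in\mathbb{F}_2$, with $a_z\ne0$ for only finitely many positive $z$; $\deg(r)=\max\{z:a_z\ne0\}$. The polynomial part is $[r]=\sum_{z\ge0}a_zx^z$. $S(r)=\frac{r}{x+1}$ if $[r](1)=0$ and $S(r)=\frac{xr}{x+1}$ if $[r](1)=1$; $p(r)_k=[S^k(r)](1)$. $Q_n=\{r:\deg(r)=n\}$ and $\mu_n$ is the probability measure on $Q_n$ under which the coefficients $a_{n-1},a_{n-2},\dots$ are independent and uniform in $\mathbb{F}_2$. *)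

From HB Require Import structures.
From mathcomp Require Import all_boot all_order all_algebra.
From mathcomp Require Import all_classical all_reals all_analysis.
Set Implicit Arguments. Unset Strict Implicit. Unset Printing Implicit Defensive.
Import Order.TTheory GRing.Theory Num.Theory.
Local Open Scope classical_set_scope.
Local Open Scope ring_scope.

(* Elements of F_2((x^-1)) with bounded positive support.                 *)
(* A series is a pair (N, a) : nat * (int -> bool) where a z is the       *)
(* coefficient of x^z (F_2 = bool, addition = addb) and N is a bound on   *)
(* the positive support: a z = false for all z > N (invariant maintained  *)
(* by all operations below; the values computed do not depend on which   *)
(* valid bound is used).                                                   *)
Definition series := (nat * (int -> bool))%type.

Definition xorsum (a : int -> bool) (lo : int) (len : nat) : bool :=
  \big[addb/false]_(j < len) a (lo + j%:Z).

(* [r](1) : the polynomial part evaluated at 1, i.e. sum_{0<=z<=N} a_z *)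
Definition polyat1 (r : series) : bool := xorsum r.2 0 r.1.+1.

(* r / (x+1) : since 1/(x+1) = sum_{j>=1} x^-j in F_2((x^-1)),
   its coefficient at x^z is sum_{z < w <= N} a_w. *)
Definition div_x1 (r : series) : series :=
  (r.1, fun z => if z < r.1%:Z then xorsum r.2 (z + 1) (absz (r.1%:Z - z)%R)
                 else false).

Definition mul_x (r : series) : series := (r.1.+1, fun z => r.2 (z - 1)).

Definition Sop (r : series) : series :=
  if polyat1 r then div_x1 (mul_x r) else div_x1 r.

Definition pseq (r : series) (k : nat) : bool := polyat1 (iter k Sop r).

(* The element of Q_n with a_n = 1 and a_{n-1-i} = w i for i : nat. *)
Definition ser_of (n : nat) (w : nat -> bool) : series :=
  (n, fun z => if z == n%:Z then true
               else if z < n%:Z then w (absz (n%:Z - 1 - z)%R) else false).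

(* The probability space for mu_n: sequences w : nat -> bool of the free   *)
(* coefficients (w i = a_{n-1-i}), with the sigma-algebra generated by the *)
(* cylinder sets, and the measure under which the coordinates are i.i.d.   *)
(* uniform on F_2 (characterized on the generating pi-system of prefix     *)
(* cylinders).                                                             *)
Definition prefix_cyl (m : nat) (b : nat -> bool) : set (nat -> bool) :=
  [set w | forall i, (i < m)%N -> w i = b i].

Definition cylinders : set (set (nat -> bool)) :=
  [set A | exists m b, A = prefix_cyl m b].

Definition coinT := g_sigma_algebraType cylinders.

Definition iid_uniform (R : realType) (P : probability coinT R) : Prop :=
  forall (m : nat) (b : nat -> bool),
    P (prefix_cyl m b : set coinT) = (((2:R)^-1) ^+ m)%:E.

Definition psum (n : nat) (w : nat -> bool) : nat :=
  \sum_(k < n) nat_of_bool (pseq (ser_of n w) k).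

From Pilot Require Import Defs.
From HB Require Import structures.
From mathcomp Require Import all_boot all_order all_algebra.
From mathcomp Require Import all_classical all_reals all_analysis.
From mathcomp Require Import zify ring.
Set Implicit Arguments.
Unset Strict Implicit.
Unset Printing Implicit Defensive.
Import numFieldNormedType.Exports.
Import Order.TTheory GRing.Theory Num.Theory.
Local Open Scope classical_set_scope.
Local Open Scope ring_scope.

(* Let P_k in F_2[x] be the polynomial part of S^k(r), so that p(r)_k = P_k(1).
   Dividing by x + 1 gives (x + 1) P_(k+1) = x^(p(r)_k) P_k + p(r)_k, hence the
   sequence p(r) depends only on [r]; conversely, if r and r' agree on
   p_0, ..., p_(n-1), then (x + 1)^n divides x^e ([r] - [r']), hence [r] - [r'].
   Two elements of Q_n differ by a polynomial of degree < n, so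
   r |-> (p(r)_0, ..., p(r)_(n-1)) is a bijection on the n free coefficients
   a_(n-1), ..., a_0: under mu_n the p(r)_k are independent fair bits.  The two
   tails are then Chernoff bounds, the exponential moment being controlled by
   cosh x <= exp (x^2 / 2). *)

Definition F2_of_bool (b : bool) : 'F_2 := b%:R.

Lemma F2_of_bool_addb a b : F2_of_bool (a (+) b) = F2_of_bool a + F2_of_bool b.
Proof. by case: a; case: b; apply/eqP. Qed.

Lemma F2_of_bool_inj : injective F2_of_bool.
Proof. by case; case => // /eqP. Qed.

Lemma addrr_F2 (x : 'F_2) : x + x = 0.
Proof. exact/addrr_pchar2/pchar_Fp. Qed.

Lemma xorsumS a lo len : xorsum a lo len.+1 = a lo (+) xorsum a (lo + 1) len.
Proof.
rewrite /xorsum big_ord_recl addr0; congr addb; apply: eq_bigr => j _.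
by congr (a _); rewrite /= -addrA; congr (_ + _); lia.
Qed.

Lemma F2_of_bool_xorsum a lo len :
  F2_of_bool (xorsum a lo len) = \sum_(j < len) F2_of_bool (a (lo + j%:Z)).
Proof. exact: (big_morph F2_of_bool F2_of_bool_addb). Qed.

Definition polypart (r : Defs.series) : {poly 'F_2} :=
  \poly_(i < r.1.+1) F2_of_bool (r.2 i%:Z).

Lemma coef_polypart r i :
  (polypart r)`_i = if (i <= r.1)%N then F2_of_bool (r.2 i%:Z) else 0.
Proof. by rewrite coef_poly ltnS. Qed.

Lemma horner1_polypart r : (polypart r).[1] = F2_of_bool (polyat1 r).
Proof.
rewrite horner_poly F2_of_bool_xorsum; apply: eq_bigr => i _.
by rewrite expr1n mulr1 add0r.
Qed.

Lemma coef_div_x1 r (i : nat) :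
  (div_x1 r).2 i%:Z = xorsum r.2 i.+1%:Z (r.1 - i).
Proof.
rewrite /div_x1 /=; case: ifPn => Hi; first by congr xorsum; lia.
have -> : (r.1 - i = 0)%N by lia.
by rewrite /xorsum big_ord0.
Qed.

Lemma polypart_div_x1 r :
  polypart (div_x1 r) * ('X + 1) = polypart r + (F2_of_bool (polyat1 r))%:P.
Proof.
apply/polyP => -[|i]; rewrite mulrDr mulr1 !coefD coefMX coefC !coef_polypart;
  rewrite !coef_div_x1 /=.
  by rewrite add0r /polyat1 xorsumS F2_of_bool_addb addrA addrr_F2 add0r subn0 add0r.
rewrite addr0; case: (ltnP i r.1) => Hi.
  have -> : (r.1 - i = (r.1 - i.+1).+1)%N by lia.
  rewrite (ltnW Hi) xorsumS F2_of_bool_addb (_ : i.+1%:Z + 1 = i.+2%:Z); last by lia.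
  by rewrite -addrA addrr_F2 addr0.
have -> : (r.1 - i = 0)%N by lia.
by rewrite /xorsum big_ord0 !addr0; case: ifP.
Qed.

Lemma polypart_mul_x r :
  polypart (mul_x r) = 'X * polypart r + (F2_of_bool (r.2 (-1)))%:P.
Proof.
apply/polyP => -[|i]; rewrite coefD coefXM coefC !coef_polypart /=.
  by rewrite !add0r.
rewrite addr0 ltnS; case: ifP => // _; congr (F2_of_bool (r.2 _)); lia.
Qed.

Lemma polypart_Sop r :
  polypart (Sop r) * ('X + 1) =
    if polyat1 r then 'X * polypart r + 1 else polypart r.
Proof.
rewrite /Sop; case: ifP => Hr; rewrite polypart_div_x1; last first.
  by rewrite Hr addr0.
rewrite -horner1_polypart polypart_mul_x hornerD hornerM hornerX hornerC mul1r.
rewrite horner1_polypart Hr polyCD addrACA -polyCD addrr_F2 polyC0 addr0.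
by rewrite /F2_of_bool polyC1.
Qed.

Lemma X_add1_neq0 : ('X + 1 : {poly 'F_2}) != 0.
Proof. by rewrite -size_poly_eq0 size_XaddC. Qed.

Lemma pseq_polypart_eq r r' : polypart r = polypart r' -> pseq r =1 pseq r'.
Proof.
move=> Er; suff Eiter k : polypart (iter k Sop r) = polypart (iter k Sop r').
  by move=> k; apply: F2_of_bool_inj; rewrite -!horner1_polypart Eiter.
elim: k => [//|k IHk]; apply: (mulIf X_add1_neq0); rewrite !iterS !polypart_Sop.
have -> : polyat1 (iter k Sop r) = polyat1 (iter k Sop r').
  by apply: F2_of_bool_inj; rewrite -!horner1_polypart IHk.
by rewrite IHk.
Qed.

Lemma polypart_sub_iter_Sop r r' n :
  (forall k, (k < n)%N -> pseq r k = pseq r' k) ->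
  exists e, ('X + 1) ^+ n * (polypart (iter n Sop r) - polypart (iter n Sop r'))
            = 'X ^+ e * (polypart r - polypart r').
Proof.
elim: n => [|n IHn] Hpre; first by exists 0%N; rewrite !expr0 !mul1r.
have [e He] := IHn (fun k lt_kn => Hpre k (ltnW lt_kn)).
exists (e + pseq r n)%N.
rewrite exprSr -mulrA mulrBr ![_ * polypart (iter n.+1 _ _)]mulrC !iterS.
rewrite !polypart_Sop -/(pseq r n) -/(pseq r' n) -(Hpre n (ltnSn n)).
case: (pseq r n); last by rewrite He addn0.
by rewrite opprD addrACA subrr addr0 -mulrBr mulrCA He mulrA -exprS addn1.
Qed.

Lemma polypart_eq_of_pseq r r' n :
  (forall k, (k < n)%N -> pseq r k = pseq r' k) ->
  (size (polypart r - polypart r')%R <= n)%N -> polypart r = polypart r'.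
Proof.
move=> Hpre Hsize; have [e He] := polypart_sub_iter_Sop Hpre.
apply/eqP; rewrite -subr_eq0; apply: contraTT Hsize => Hneq0; rewrite -ltnNge.
have coprime_X : coprimep ('X + 1 : {poly 'F_2}) ('X ^+ e).
  apply: coprimep_expr; rewrite -[X in coprimep _ X]subr0 -polyC0 coprimep_XsubC.
  by rewrite rootE !hornerE oner_eq0.
have : ('X + 1) ^+ n %| polypart r - polypart r'.
  by rewrite -(Gauss_dvdpr _ (coprimep_expl n coprime_X)) -He dvdp_mulIl.
have size_pow : size (('X + 1 : {poly 'F_2}) ^+ n) = n.+1.
  rewrite -[LHS]prednK ?lt0n ?size_poly_eq0 ?expf_neq0 ?X_add1_neq0 //.
  by rewrite size_exp size_XaddC mul1n.
by move=> /(dvdp_leq Hneq0); rewrite size_pow.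
Qed.

Lemma coef_ser_of n w (i : nat) : (ser_of n w).2 i%:Z =
  if i == n then true else if (i < n)%N then w (n - 1 - i)%N else false.
Proof.
rewrite /ser_of /=; case: (ltngtP i n) => [lt_in|lt_ni|->]; last by rewrite eqxx.
  have -> : (i%:Z == n%:Z) = false by apply/eqP; lia.
  have -> : (i%:Z < n%:Z) = true by lia.
  by congr w; lia.
have -> : (i%:Z == n%:Z) = false by apply/eqP; lia.
by have -> : (i%:Z < n%:Z) = false by lia.
Qed.

Lemma polypart_ser_of_eq n w w' : (forall i, (i < n)%N -> w i = w' i) ->
  polypart (ser_of n w) = polypart (ser_of n w').
Proof.
move=> Ew; apply/polyP => j; rewrite !coef_polypart !coef_ser_of /=.
case: (j == n) => //; case: ifP => // _; case: ifP => // lt_jn.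
by rewrite Ew //; lia.
Qed.

Lemma size_polypart_ser_of_sub n w w' :
  (size (polypart (ser_of n w) - polypart (ser_of n w'))%R <= n)%N.
Proof.
apply/leq_sizeP => j le_nj; rewrite coefB !coef_polypart !coef_ser_of /=.
case: eqP => [_|ne_jn]; first by rewrite subrr.
by rewrite ltnNge le_nj; case: ifP; rewrite subrr.
Qed.

Lemma pseq_ser_of_prefix n w w' : (forall i, (i < n)%N -> w i = w' i) ->
  pseq (ser_of n w) =1 pseq (ser_of n w').
Proof. by move=> Ew; apply/pseq_polypart_eq/polypart_ser_of_eq. Qed.

Lemma psum_prefix n w w' : (forall i, (i < n)%N -> w i = w' i) ->
  psum n w = psum n w'.
Proof.
by move=> Ew; apply: eq_bigr => k _; rewrite (pseq_ser_of_prefix Ew).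
Qed.

Lemma prefix_of_pseq_ser_of n w w' :
  (forall k, (k < n)%N -> pseq (ser_of n w) k = pseq (ser_of n w') k) ->
  forall i, (i < n)%N -> w i = w' i.
Proof.
move=> Ep i lt_in.
have := polypart_eq_of_pseq Ep (size_polypart_ser_of_sub n w w').
move=> /polyP /(_ (n - 1 - i)%N); rewrite !coef_polypart !coef_ser_of.
have -> : (n - 1 - i == n)%N = false by apply/eqP; lia.
have -> : (n - 1 - i < n)%N by lia.
have -> : (n - 1 - i <= n)%N by lia.
have -> : (n - 1 - (n - 1 - i) = i)%N by lia.
exact: F2_of_bool_inj.
Qed.

Section Words.
Variable n : nat.
Local Notation word := {ffun 'I_n -> bool}.

Definition pad (b : word) : nat -> bool :=
  fun i => if insub i is Some j then b j else false.

Lemma pad_ord (b : word) (j : 'I_n) : pad b j = b j.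
Proof.
rewrite /pad; case: insubP => [k _ Ek|]; last by rewrite ltn_ord.
by congr (b _); apply: val_inj.
Qed.

Definition word_prefix (w : nat -> bool) : word := [ffun i : 'I_n => w i].

Lemma pad_word_prefix w i : (i < n)%N -> pad (word_prefix w) i = w i.
Proof. by move=> lt_in; rewrite (pad_ord _ (Ordinal lt_in)) ffunE. Qed.

Definition pseq_word (b : word) : word :=
  [ffun k : 'I_n => pseq (ser_of n (pad b)) k].

Lemma pseq_word_inj : injective pseq_word.
Proof.
move=> b b' /ffunP Eb; apply/ffunP => j; rewrite -!pad_ord.
apply: prefix_of_pseq_ser_of (ltn_ord j) => k lt_kn.
by have := Eb (Ordinal lt_kn); rewrite !ffunE.
Qed.

Lemma card_psum_pad (c : pred nat) :
  #|[pred b : word | c (psum n (pad b))]| = #|[pred q : word | c (\sum_(k < n) q k)%N]|.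
Proof.
rewrite -!sum1_card [RHS](reindex_inj pseq_word_inj); apply: eq_bigl => b.
by rewrite !inE /=; congr c; apply: eq_bigr => k _; rewrite ffunE.
Qed.

Lemma psum_event_cylinders (c : pred nat) :
  [set w | c (psum n w)] =
  \bigcup_(b in [set` [pred b : word | c (psum n (pad b))]]) prefix_cyl n (pad b).
Proof.
apply/seteqP; split => w /=.
  move=> cw; exists (word_prefix w); last by move=> i /pad_word_prefix.
  by rewrite /= inE (psum_prefix (pad_word_prefix w)).
by move=> [b]; rewrite /= inE => cb /psum_prefix ->.
Qed.

End Words.

Lemma measure_pad_cylinders (R : realType) (P : probability coinT R)
    (HP : iid_uniform P) n (D : {pred {ffun 'I_n -> bool}}) :
  P (\bigcup_(b in [set` D]) prefix_cyl n (pad b) : set coinT) =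
  (#|D|%:R / 2 ^+ n)%:E.
Proof.
rewrite measure_fin_bigcup //.
- rewrite -(@bigfs _ _ _ _ (enum {ffun 'I_n -> bool})) ?enum_uniq //; last first.
    by move=> b _; rewrite mem_enum.
  rewrite big_enum_cond /=; under eq_bigr do rewrite HP.
  by rewrite sumEFin sumr_const -exprVn mulr_natl.
- move=> b b' _ _ [w [wb wb']]; apply/ffunP => j.
  by rewrite -!pad_ord -wb // -wb'.
- by move=> b _; apply: sub_sigma_algebra; exists n, (pad b).
Qed.

Lemma measure_psum_event (R : realType) (P : probability coinT R)
    (HP : iid_uniform P) n (c : pred nat) :
  P ([set w | c (psum n w)] : set coinT) =
  (#|[pred q : {ffun 'I_n -> bool} | c (\sum_(k < n) q k)%N]|%:R / 2 ^+ n)%:E.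
Proof. by rewrite psum_event_cylinders measure_pad_cylinders // card_psum_pad. Qed.

Lemma card_sum_bits_le (R : realType) n (mu t : R) (c : pred nat) :
  (forall m, c m -> mu * t <= mu * m%:R) ->
  #|[pred q : {ffun 'I_n -> bool} | c (\sum_(k < n) q k)%N]|%:R
    <= expR (- (mu * t)) * (1 + expR mu) ^+ n.
Proof.
move=> Hc; rewrite -sum1_card natr_sum big_mkcond /=.
apply: (@le_trans _ _ (\sum_(q : {ffun 'I_n -> bool})
           expR (mu * (\sum_(k < n) q k)%N%:R - mu * t))).
  apply: ler_sum => q _; rewrite inE /=; case: ifP => [cq|_]; last exact: expR_ge0.
  by rewrite -[X in X <= _]expR0 ler_expR subr_ge0 Hc.
have -> : 1 + expR mu = \sum_(b : bool) expR (mu * (nat_of_bool b)%:R).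
  by rewrite big_bool /= mulr1 mulr0 expR0 addrC.
have -> : forall y : R, y ^+ n = \prod_(k < n) y.
  by move=> y; rewrite prodr_const card_ord.
rewrite bigA_distr_bigA mulr_sumr.
apply: ler_sum => q _; rewrite addrC expRD; apply: ler_wpM2l; first exact: expR_ge0.
by rewrite natr_sum mulr_sumr expR_sum.
Qed.

Lemma exp_coeff_addN (R : realType) (x : R) k :
  exp_coeff x k + exp_coeff (- x) k = if odd k then 0 else exp_coeff x k *+ 2.
Proof.
rewrite /exp_coeff /= exprNn -signr_odd; case: (odd k).
  by rewrite expr1 mulN1r mulNr addrN.
by rewrite expr0 mul1r mulr2n.
Qed.

Lemma fact_double_ge n : (2 ^ n * n`! <= (2 * n)`!)%N.
Proof.
elim: n => [//|n IHn]; rewrite expnS factS.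
have -> : (2 * n.+1 = (2 * n).+2)%N by lia.
rewrite !factS; have := leq_mul (leqnn (2 * n).+2) IHn.
have := fact_gt0 (2 * n); move: (2 ^ n)%N n`! (2 * n)`! => p a b; nia.
Qed.

Lemma exp_coeff_double_le (R : realType) (x : R) j :
  exp_coeff x (2 * j) <= exp_coeff (x ^+ 2 / 2) j.
Proof.
rewrite /exp_coeff /= exprM expr_div_n -mulrA -invfM.
apply: ler_wpM2l; first exact/exprn_ge0/sqr_ge0.
rewrite lef_pV2 ?posrE ?ltr0n ?fact_gt0 ?mulr_gt0 ?exprn_gt0 //.
by rewrite -natrX -natrM ler_nat fact_double_ge.
Qed.

Lemma cosh_le_expR_sqr (R : realType) (x : R) :
  (expR x + expR (- x)) / 2 <= expR (x ^+ 2 / 2).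
Proof.
rewrite ler_pdivrMr // mulrC.
have cvg_cosh : (series (exp_coeff x) + series (exp_coeff (- x))) @ \oo -->
    expR x + expR (- x) by apply: cvgD; apply: is_cvg_series_exp_coeff.
have cvg_exp : (fun N => 2 * series (exp_coeff (x ^+ 2 / 2)) N) @ \oo -->
    2 * expR (x ^+ 2 / 2).
  by apply: cvgM; [exact: cvg_cst | exact: is_cvg_series_exp_coeff].
apply: (ler_cvg_to cvg_cosh cvg_exp); apply: nearW => N /=.
pose c k := exp_coeff x k + exp_coeff (- x) k.
have c_ge0 k : 0 <= c k.
  rewrite /c exp_coeff_addN; case: ifPn => // even_k.
  by rewrite mulrn_wge0 // divr_ge0 // exprn_even_ge0.
have sum_c_double M : \sum_(0 <= k < 2 * M) c k = \sum_(0 <= j < M) c (2 * j)%N.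
  elim: M => [|M IHM]; first by rewrite !big_geq.
  have -> : (2 * M.+1 = (2 * M).+2)%N by lia.
  by rewrite !big_nat_recr //= IHM [X in _ + X = _]exp_coeff_addN oddS oddM addr0.
have -> : (series (exp_coeff x) + series (exp_coeff (- x))) N = \sum_(0 <= k < N) c k.
  by rewrite /c big_split.
apply: (@le_trans _ _ (\sum_(0 <= k < 2 * N) c k)).
  rewrite (@big_cat_nat _ _ _ N 0 (2 * N)) //= ?lerDl ?sumr_ge0 //; lia.
rewrite sum_c_double /series /= mulr_sumr; apply: ler_sum => j _.
rewrite /c exp_coeff_addN oddM -mulr_natl ler_pM2l //.
exact: exp_coeff_double_le.
Qed.

Lemma psum_tail_le (R : realType) (P : probability coinT R) (HP : iid_uniform P)
    n (mu c K : R) (cnd : pred nat) :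
  (forall m, cnd m -> mu * (n%:R * c) <= mu * m%:R) ->
  (1 + expR mu) / 2 * expR (- (mu * c)) <= K ->
  (P ([set w | cnd (psum n w)] : set coinT) <= (K ^+ n)%:E)%E.
Proof.
move=> Hcnd HK; rewrite measure_psum_event // lee_fin ler_pdivrMr ?exprn_gt0 //.
apply: le_trans (card_sum_bits_le n Hcnd) _.
have -> : expR (- (mu * (n%:R * c))) = expR (- (mu * c)) ^+ n.
  by rewrite -expRM_natl mulrN mulrCA.
have K_ge0 : 0 <= K.
  by apply: le_trans HK; rewrite mulr_ge0 ?divr_ge0 ?addr_ge0 ?expR_ge0.
rewrite -!exprMn lerXn2r ?nnegrE ?mulr_ge0 ?addr_ge0 ?expR_ge0 //.
by move: HK; rewrite mulrAC ler_pdivrMr // mulrC.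
Qed.

(* 4 x is the optimal Chernoff parameter for the threshold 1/2 + x. *)
Lemma chernoff_factor_le (R : realType) (x : R) :
  (1 + expR (4 * x)) / 2 * expR (- (4 * x * (2^-1 + x))) <= expR (- (2 * x ^+ 2)).
Proof.
have split_exp : expR (- (4 * x * (2^-1 + x))) =
    expR (- (2 * x)) * expR (- (4 * x ^+ 2)) by rewrite -expRD; congr expR; field.
have shift_exp : expR (2 * x) = expR (4 * x) * expR (- (2 * x)).
  by rewrite -expRD; congr expR; ring.
have -> : (1 + expR (4 * x)) / 2 * expR (- (4 * x * (2^-1 + x))) =
    (expR (2 * x) + expR (- (2 * x))) / 2 * expR (- (4 * x ^+ 2)).
  by rewrite split_exp shift_exp; field.
apply: le_trans (ler_wpM2r (expR_ge0 _) (cosh_le_expR_sqr _)) _.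
rewrite -expRD (_ : (2 * x) ^+ 2 / 2 + - (4 * x ^+ 2) = - (2 * x ^+ 2)) //.
by field.
Qed.

Theorem lemma2p11 (R : realType) (P : probability coinT R)
    (HP : iid_uniform P) (eps : R) (n : nat) (heps : 0 < eps) :
  (P ([set w | (n%:R * (2^-1 + eps) <= (psum n w)%:R :> R)%R] : set coinT)
     <= (expR (- (2 * eps ^+ 2 * n%:R))%R)%:E)%E /\
  (P ([set w | ((psum n w)%:R <= n%:R * (2^-1 - eps) :> R)%R] : set coinT)
     <= (expR (- (2 * eps ^+ 2 * n%:R))%R)%:E)%E.
Proof.
have -> : expR (- (2 * eps ^+ 2 * n%:R)) = expR (- (2 * eps ^+ 2)) ^+ n.
  by rewrite -expRM_natl mulrN mulrC.
split.
  apply: (@psum_tail_le _ _ HP n _ _ _ (fun m => n%:R * (2^-1 + eps) <= m%:R)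
            _ (chernoff_factor_le eps)) => m /= le_m.
  by rewrite ler_pM2l // mulr_gt0.
have := chernoff_factor_le (- eps); rewrite sqrrN => factor_le.
apply: (@psum_tail_le _ _ HP n _ _ _ (fun m => m%:R <= n%:R * (2^-1 - eps))
          _ factor_le) => m /= le_m.
by rewrite mulrN !mulNr lerN2 ler_pM2l // mulr_gt0.
Qed.
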